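(* Let $k\ge1$, $\alpha\in\mathrm{ASP}$ and $\beta\in\mathrm{EA}_k$ with $k>\mathrm{sci}(\alpha)+\mathrm{inv}_k(\beta)$. Then $\mathrm{sci}(\alpha\star\beta)\le\mathrm{sci}(\alpha)+\mathrm{inv}_k(\beta)$.
   Context: $\mathrm{ASP}$ denotes the group of almost-sign-preserving permutations: bijections $\alpha:\mathbb Z\to\mathbb Z$ such that $n$ and $\alpha(n)$ have the same sign for all but finitely many $n$ (here ''same sign'' means both positive or both nonpositive). $\mathrm{EA}_k$ is the group of bijections $\tau:\mathbb Z\to\mathbb Z$ with $\tau(n+k)=\tau(n)+k$ for all $n$ (these lie in $\mathrm{ASP}$). For $\alpha\in\mathrm{ASP}$ let $s_\alpha(a,b)=\#\{\ell\ge b:\ \alpha(\ell)<a\}$. The Demazure product $\star$ is the (unique, well-defined, associative) operation on $\mathrm{ASP}$ characterized by $s_{\alpha\star\beta}(a,b)=\min_{\ell\in\mathbb Z}\big(s_\alpha(a,\ell)+s_\beta(\ell,b)\big)$ for all $a,b\in\mathbb Z$. An inversion of a bijection $\tau$ is a pair $(a,b)$ with $a<b$, $\tau(a)>\tau(b)$; two inversions $(a,b),(a',b')$ are $k$-equivalent if $a-a'=b-b'\equiv0\pmod k$; $\mathrm{inv}_k(\tau)$ is the number of $k$-equivalence classes of inversions. A sign-changing inversion of $\alpha$ is a pair $(x,y)$ with $x<y$ and $\alpha(x)>0\ge\alpha(y)$; $\mathrm{sci}(\alpha)$ is the number of these. *)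

From Stdlib Require Import ZArith List ClassicalEpsilon.
Open Scope Z_scope.

Definition bij_Z (f : Z -> Z) : Prop :=
  exists g : Z -> Z, (forall x, g (f x) = x) /\ (forall y, f (g y) = y).

Definition same_sign (x y : Z) : Prop := (0 < x /\ 0 < y) \/ (x <= 0 /\ y <= 0).

Definition ASP (alpha : Z -> Z) : Prop :=
  bij_Z alpha /\
  exists l : list Z, forall n, ~ same_sign n (alpha n) -> In n l.

Definition EA (k : Z) (tau : Z -> Z) : Prop :=
  bij_Z tau /\ forall n, tau (n + k) = tau n + k.

(* Choose a natural number satisfying P (if any; 0 otherwise). Used only
   with predicates having a unique witness. *)
Definition choose_nat (P : nat -> Prop) : nat :=
  match excluded_middle_informative (exists c, P c) with
  | left H => proj1_sig (constructive_indefinite_description _ H)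
  | right _ => 0%nat
  end.

Definition is_card {T : Type} (P : T -> Prop) (c : nat) : Prop :=
  exists l : list T, NoDup l /\ (forall x, P x <-> In x l) /\ length l = c.

(* Cardinality of a finite set (0 by convention if infinite; never used so). *)
Definition card {T : Type} (P : T -> Prop) : nat := choose_nat (is_card P).

Definition s_fun (alpha : Z -> Z) (a b : Z) : nat :=
  card (fun l : Z => b <= l /\ alpha l < a).

(* The Demazure product gamma = alpha * beta, via its characterization. *)
Definition is_demazure (alpha beta gamma : Z -> Z) : Prop :=
  forall a b : Z,
    (exists l : Z, s_fun gamma a b = (s_fun alpha a l + s_fun beta l b)%nat) /\
    (forall l : Z, (s_fun gamma a b <= s_fun alpha a l + s_fun beta l b)%nat).

Definition inversion (tau : Z -> Z) (p : Z * Z) : Prop :=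
  fst p < snd p /\ tau (fst p) > tau (snd p).

Definition kequiv (k : Z) (p q : Z * Z) : Prop :=
  fst p - fst q = snd p - snd q /\ Z.divide k (fst p - fst q).

(* The inversions of tau fall into exactly c k-equivalence classes:
   a list of c pairwise inequivalent inversions meeting every class. *)
Definition is_num_inv_classes (k : Z) (tau : Z -> Z) (c : nat) : Prop :=
  exists l : list (Z * Z),
    NoDup l /\ length l = c /\
    (forall p, In p l -> inversion tau p) /\
    (forall p q, In p l -> In q l -> kequiv k p q -> p = q) /\
    (forall p, inversion tau p -> exists q, In q l /\ kequiv k p q).

Definition inv_k (k : Z) (tau : Z -> Z) : nat :=
  choose_nat (is_num_inv_classes k tau).

Definition sci (alpha : Z -> Z) : nat :=
  card (fun p : Z * Z => fst p < snd p /\ alpha (fst p) > 0 /\ alpha (snd p) <= 0).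

From Stdlib Require Import ZArith List Lia Classical ClassicalEpsilon PropExtensionality
  FunctionalExtensionality FinFun.
Open Scope Z_scope.
Open Scope bool_scope.

(* Put F_alpha(b) := s_alpha(1, b), the number of l >= b with alpha l <= 0.
   It is a staircase: non-increasing by steps 0 or 1, eventually 0 on the right and strictly
   decreasing on the left; its inversions, pairs a < b with a flat step at a and a drop at b,
   are exactly the sign-changing inversions of alpha.  At a = 1 the Demazure characterization
   reads F_{alpha * beta}(b) = min_l F_alpha(l) + s_beta(l, b).
   Induct on the number of inversion classes of beta.  Without inversions beta is a
   translation and the min-plus product translates the staircase.  Otherwise, at a descent x
   of beta^-1, beta = sigma beta' where sigma is the k-periodic transposition of x and x + 1
   and beta' has one class fewer; by associativity of min-plus products we may first multiply
   the staircase by s_sigma, which raises it at (at most one) flat step following a drop at a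
   position congruent to x + 1 and so creates at most one new inversion: two such positions
   would be k apart and force k - 1 inversions between them, excluded by the bound on k. *)

(** * Finite cardinalities *)

Lemma choose_nat_spec (P : nat -> Prop) : (exists c, P c) -> P (choose_nat P).
Proof.
  intros H. unfold choose_nat.
  destruct (excluded_middle_informative _) as [E|E]; [|contradiction].
  exact (proj2_sig (constructive_indefinite_description _ E)).
Qed.

Lemma is_card_unique {T} (P : T -> Prop) c1 c2 : is_card P c1 -> is_card P c2 -> c1 = c2.
Proof.
  intros [l1 [N1 [H1 L1]]] [l2 [N2 [H2 L2]]]. subst.
  apply Nat.le_antisymm; apply NoDup_incl_length; auto; intros x Hx.
  - apply H2, H1; auto.
  - apply H1, H2; auto.
Qed.

Lemma card_eq {T} (P : T -> Prop) c : is_card P c -> card P = c.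
Proof.
  intros H. apply (is_card_unique P); auto. apply (choose_nat_spec (is_card P)). eauto.
Qed.

Lemma card_ext {T} (P Q : T -> Prop) : (forall x, P x <-> Q x) -> card P = card Q.
Proof.
  intros H. replace Q with P; auto.
  apply functional_extensionality; intro; apply propositional_extensionality; auto.
Qed.

Lemma is_card_ext {T} (P Q : T -> Prop) c :
  (forall x, P x <-> Q x) -> is_card P c -> is_card Q c.
Proof.
  intros H [l [N [E L]]]. exists l. repeat split; auto; intros Hx.
  - apply E, H; auto.
  - apply H, E; auto.
Qed.

Lemma is_card_exists_of_incl {T} (L : list T) :
  forall P : T -> Prop, (forall x, P x -> In x L) -> exists c, is_card P c.
Proof.
  induction L as [|a L IH]; intros P HP.
  - exists 0%nat, nil. split; [constructor|split; auto].
    intro x; split; [intro H; destruct (HP x H)| intros []].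
  - destruct (IH (fun x => P x /\ x <> a)) as [c [l [N [E Len]]]].
    { intros x [Px Nx]. destruct (HP x Px); [congruence|auto]. }
    destruct (classic (P a)) as [Pa|Pa].
    + exists (S c), (a :: l). split; [|split].
      * constructor; auto. rewrite <- E. tauto.
      * intros x. simpl. rewrite <- E. split.
        -- intros Px. destruct (classic (a = x)); [left | right; split]; auto.
        -- intros [<-|[Px _]]; auto.
      * simpl; auto.
    + exists c, l. split; [auto|split; auto]. intro x. rewrite <- E. split.
      * intros Px; split; auto. intro; subst; auto.
      * tauto.
Qed.

Lemma is_card_add {T} (P : T -> Prop) c a :
  is_card P c -> ~ P a -> is_card (fun x => P x \/ x = a) (S c).
Proof.
  intros [l [N [E L]]] Na. exists (a :: l). repeat split.
  - constructor; auto. rewrite <- E; auto.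
  - intros [Px| ->]; simpl; [right; apply E; auto | left; auto].
  - simpl. intros [<-|H]; [right; auto | left; apply E; auto].
  - simpl; auto.
Qed.

Lemma is_card_comp_bij {T} (P : T -> Prop) c (f g : T -> T) :
  (forall x, f (g x) = x) -> (forall x, g (f x) = x) ->
  is_card P c -> is_card (fun x => P (f x)) c.
Proof.
  intros fg gf [l [N [E L]]]. exists (map g l). repeat split.
  - apply Injective_map_NoDup; auto. intros x y Hxy. rewrite <- (fg x), <- (fg y), Hxy; auto.
  - intros Px. apply in_map_iff. exists (f x). split; auto. apply E; auto.
  - intros Hx. apply in_map_iff in Hx. destruct Hx as [y [<- Hy]]. rewrite fg. apply E; auto.
  - rewrite length_map; auto.
Qed.

Lemma is_card_length_le {T} (P : T -> Prop) c l :
  is_card P c -> NoDup l -> (forall x, In x l -> P x) -> (length l <= c)%nat.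
Proof.
  intros [l' [N [E L]]] Nl H. subst. apply NoDup_incl_length; auto.
  intros x Hx. apply E, H; auto.
Qed.

Lemma is_card_empty {T} (P : T -> Prop) : (forall x, ~ P x) -> is_card P 0.
Proof.
  intros H. exists nil. split; [constructor|split; auto].
  intro x; split; [intro Hx; destruct (H x Hx) | intros []].
Qed.

Definition zrange (lo hi : Z) : list Z :=
  map (fun i => lo + Z.of_nat i) (seq 0 (Z.to_nat (hi - lo))).

Lemma in_zrange lo hi z : In z (zrange lo hi) <-> lo <= z < hi.
Proof.
  unfold zrange. rewrite in_map_iff. split.
  - intros [i [<- Hi]]. apply in_seq in Hi. lia.
  - intros H. exists (Z.to_nat (z - lo)). split; [lia|]. apply in_seq. lia.
Qed.

Lemma NoDup_zrange lo hi : NoDup (zrange lo hi).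
Proof.
  apply Injective_map_NoDup; [|apply seq_NoDup]. intros a b H; lia.
Qed.

Lemma length_zrange lo hi : length (zrange lo hi) = Z.to_nat (hi - lo).
Proof. unfold zrange. rewrite length_map, length_seq. auto. Qed.

Lemma is_card_exists_of_bounded (P : Z -> Prop) lo hi :
  (forall x, P x -> lo <= x < hi) -> exists c, is_card P c.
Proof.
  intros H. apply (is_card_exists_of_incl (zrange lo hi)). intros x Hx. apply in_zrange; auto.
Qed.

Lemma is_card_exists_of_bounded2 (P : Z * Z -> Prop) lo hi :
  (forall p, P p -> lo <= fst p < hi /\ lo <= snd p < hi) -> exists c, is_card P c.
Proof.
  intros H. apply (is_card_exists_of_incl (list_prod (zrange lo hi) (zrange lo hi))).
  intros [a b] Hx. apply H in Hx. simpl in Hx. apply in_prod; apply in_zrange; lia.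
Qed.

Lemma bounded_on_range (h : Z -> Z) lo :
  forall n : nat, exists M, forall r, lo <= r < lo + Z.of_nat n -> h r <= M.
Proof.
  induction n as [|n [M HM]].
  - exists 0. intros; lia.
  - exists (Z.max M (h (lo + Z.of_nat n))). intros r Hr.
    destruct (Z.eq_dec r (lo + Z.of_nat n)); [subst; lia|]. specialize (HM r ltac:(lia)). lia.
Qed.

Lemma list_bounds (E : list Z) : exists m M, forall x, In x E -> m <= x <= M.
Proof.
  induction E as [|a E [m [M H]]].
  - exists 0, 0. intros x [].
  - exists (Z.min a m), (Z.max a M). intros x [<-|Hx]; [lia|]. specialize (H x Hx). lia.
Qed.

Lemma lipschitz_nondecr_le (F : Z -> nat) :
  (forall m, F m <= F (m + 1)%Z <= F m + 1)%nat ->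
  forall l m, l <= m -> (F l <= F m)%nat /\ Z.of_nat (F m) <= Z.of_nat (F l) + (m - l).
Proof.
  intros HF l m H.
  assert (A : forall n : nat, (F l <= F (l + Z.of_nat n)%Z <= F l + n)%nat).
  { induction n as [|n IH]; [rewrite Z.add_0_r; lia|].
    specialize (HF (l + Z.of_nat n)).
    replace (l + Z.of_nat (S n)) with (l + Z.of_nat n + 1) by lia. lia. }
  specialize (A (Z.to_nat (m - l))).
  replace (l + Z.of_nat (Z.to_nat (m - l))) with m in A by lia. lia.
Qed.

Lemma lipschitz_nonincr_le (F : Z -> nat) :
  (forall m, F (m + 1)%Z <= F m <= F (m + 1)%Z + 1)%nat ->
  forall l m, l <= m -> (F m <= F l)%nat /\ Z.of_nat (F l) <= Z.of_nat (F m) + (m - l).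
Proof.
  intros HF l m H.
  assert (HF' : forall m, (F (- m)%Z <= F (- (m + 1))%Z <= F (- m)%Z + 1)%nat).
  { intros n. specialize (HF (- (n + 1))). replace (- (n + 1) + 1) with (- n) in HF by lia. lia. }
  pose proof (lipschitz_nondecr_le (fun n => F (- n)) HF' (- m) (- l) ltac:(lia)) as A.
  cbv beta in A. rewrite !Z.opp_involutive in A. lia.
Qed.

Definition is_min (f : Z -> nat) (v : nat) : Prop :=
  (exists l, f l = v) /\ forall l, (v <= f l)%nat.

Lemma is_min_unique f v w : is_min f v -> is_min f w -> v = w.
Proof. intros [[l1 H1] A1] [[l2 H2] A2]. specialize (A1 l2). specialize (A2 l1). lia. Qed.

Lemma is_min_minplus_assoc (G : Z -> nat) (K : Z -> Z -> nat) (S C D : Z -> nat) h :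
  (forall l, is_min (fun m => (K l m + S m)%nat) (C l)) ->
  (forall m, is_min (fun l => (G l + K l m)%nat) (D m)) ->
  is_min (fun l => (G l + C l)%nat) h -> is_min (fun m => (D m + S m)%nat) h.
Proof.
  intros HC HD [[l0 E0] A0].
  assert (Low : forall m, (h <= D m + S m)%nat).
  { intros m. destruct (HD m) as [[l1 El] _]. destruct (HC l1) as [_ Cl].
    specialize (Cl m). specialize (A0 l1). lia. }
  destruct (HC l0) as [[m0 Em] _]. destruct (HD m0) as [_ Dlow].
  split; auto. exists m0. specialize (Dlow l0). specialize (Low m0). lia.
Qed.

(** * Affine permutations and their counting functions *)

Definition s_finite (f : Z -> Z) : Prop :=
  forall a b, exists c, is_card (fun l => b <= l /\ f l < a) c.

Lemma s_fun_step_index f a b : s_finite f ->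
  s_fun f a b = (s_fun f a (b + 1) + if Z.ltb (f b) a then 1 else 0)%nat.
Proof.
  intros F. destruct (F a (b + 1)) as [c Hc]. unfold s_fun.
  rewrite (card_eq _ _ Hc). apply card_eq.
  destruct (Z.ltb_spec (f b) a).
  - rewrite Nat.add_1_r. eapply is_card_ext; [|apply (is_card_add _ _ b Hc)].
    + intro l. split.
      * intros [[H1 H2]| ->]; split; auto; lia.
      * intros [H1 H2]. destruct (Z.eq_dec l b); [right; auto|left; split; auto; lia].
    + simpl. lia.
  - rewrite Nat.add_0_r. eapply is_card_ext; [|apply Hc].
    intro l. split; intros [H1 H2]; split; auto; try lia.
    destruct (Z.eq_dec l b); subst; lia.
Qed.

Lemma s_fun_step_value f g a b : s_finite f ->
  (forall x, f (g x) = x) -> (forall x, g (f x) = x) ->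
  s_fun f (a + 1) b = (s_fun f a b + if Z.leb b (g a) then 1 else 0)%nat.
Proof.
  intros F fg gf. destruct (F a b) as [c Hc]. unfold s_fun.
  rewrite (card_eq _ _ Hc). apply card_eq.
  destruct (Z.leb_spec b (g a)).
  - rewrite Nat.add_1_r. eapply is_card_ext; [|apply (is_card_add _ _ (g a) Hc)].
    + intro l. split.
      * intros [[H1 H2]| ->]; split; try lia. rewrite fg; lia.
      * intros [H1 H2]. destruct (Z.eq_dec (f l) a) as [E|E].
        -- right. rewrite <- E, gf; auto.
        -- left. split; auto; lia.
    + simpl. rewrite fg. lia.
  - rewrite Nat.add_0_r. eapply is_card_ext; [|apply Hc].
    intro l. split; intros [H1 H2]; split; auto; try lia.
    destruct (Z.eq_dec (f l) a) as [E|E]; [|lia]. rewrite <- E, gf in H. lia.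
Qed.

Lemma shift_mult k f : (forall n, f (n + k) = f n + k) ->
  forall n j, f (n + j * k) = f n + j * k.
Proof.
  intros H.
  assert (P : forall (m : nat) n, f (n + Z.of_nat m * k) = f n + Z.of_nat m * k).
  { induction m; intros n; [simpl; rewrite !Z.add_0_r; auto|].
    replace (n + Z.of_nat (S m) * k) with (n + Z.of_nat m * k + k) by lia. rewrite H, IHm. lia. }
  intros n j. destruct (Z.le_gt_cases 0 j).
  - replace j with (Z.of_nat (Z.to_nat j)) by lia. apply P.
  - specialize (P (Z.to_nat (- j)) (n + j * k)).
    replace (n + j * k + Z.of_nat (Z.to_nat (- j)) * k) with n in P by lia. lia.
Qed.

Lemma shift_comm_inverse k f g : (forall x, f (g x) = x) -> (forall x, g (f x) = x) ->
  (forall n, f (n + k) = f n + k) -> forall n, g (n + k) = g n + k.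
Proof. intros fg gf H n. rewrite <- (fg n) at 1. rewrite <- H. apply gf. Qed.

Lemma shift_comm_displacement_bounded k f : 1 <= k ->
  (forall n, f (n + k) = f n + k) -> exists M, forall l, l - f l <= M.
Proof.
  intros Hk H.
  destruct (bounded_on_range (fun r => r - f r) 0 (Z.to_nat k)) as [M HM].
  exists M. intros l.
  pose proof (shift_mult k f H (l mod k) (l / k)) as E.
  rewrite Z.add_comm, Z.mul_comm, <- Z.div_mod in E by lia.
  assert (0 <= l mod k < k) by (apply Z.mod_pos_bound; lia).
  specialize (HM (l mod k) ltac:(lia)).
  assert (l = k * (l / k) + l mod k) by (apply Z.div_mod; lia).
  set (q := k * (l / k)) in *. lia.
Qed.

Lemma s_finite_shift_comm k f : 1 <= k -> (forall n, f (n + k) = f n + k) -> s_finite f.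
Proof.
  intros Hk H a b.
  destruct (shift_comm_displacement_bounded k f Hk H) as [M HM].
  apply (is_card_exists_of_bounded _ b (a + M + 1)).
  intros l [H1 H2]. specialize (HM l). lia.
Qed.

Lemma no_inversion_translation (beta g : Z -> Z) :
  (forall x, beta (g x) = x) -> (forall x, g (beta x) = x) ->
  (forall a b, a < b -> beta a <= beta b) -> forall n, beta n = n + beta 0.
Proof.
  intros bg gb M.
  assert (St : forall n, beta (n + 1) = beta n + 1).
  { intros n. assert (beta n < beta (n + 1)).
    { pose proof (M n (n + 1) ltac:(lia)). destruct (Z.eq_dec (beta n) (beta (n + 1))) as [e|]; [|lia].
      apply (f_equal g) in e. rewrite !gb in e. lia. }
    destruct (Z.eq_dec (beta (n + 1)) (beta n + 1)); auto. exfalso.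
    set (m := g (beta n + 1)). assert (Em : beta m = beta n + 1) by apply bg.
    destruct (Z.lt_total m n) as [|[e|]]; [pose proof (M m n ltac:(lia)); lia| subst m; rewrite e in Em; lia|].
    destruct (Z.eq_dec m (n + 1)) as [e|]; [rewrite e in Em; lia|].
    pose proof (M (n + 1) m ltac:(lia)). lia. }
  intros n. pose proof (shift_mult 1 beta St 0 n) as E. rewrite Z.mul_1_r, Z.add_0_l in E. lia.
Qed.

Lemma kequiv_sym k p q : kequiv k p q -> kequiv k q p.
Proof.
  intros [H1 H2]. split; [lia|].
  replace (fst q - fst p) with (-(fst p - fst q)) by lia. apply Z.divide_opp_r; auto.
Qed.

Lemma kequiv_trans k p q r : kequiv k p q -> kequiv k q r -> kequiv k p r.
Proof.
  intros [H1 H2] [H3 H4]. split; [lia|].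
  replace (fst p - fst r) with ((fst p - fst q) + (fst q - fst r)) by lia. apply Z.divide_add_r; auto.
Qed.

Lemma kequivP k p a b : kequiv k p (a, b) <-> exists j, p = (a + j * k, b + j * k).
Proof.
  destruct p as [p1 p2]. unfold kequiv. simpl. split.
  - intros [H1 [j Hj]]. exists j. f_equal; lia.
  - intros [j Hj]. inversion Hj. split; [lia|]. exists j. lia.
Qed.

Lemma num_inv_classes_exists k beta : 1 <= k -> (forall n, beta (n + k) = beta n + k) ->
  exists c, is_num_inv_classes k beta c.
Proof.
  intros Hk Sh.
  destruct (shift_comm_displacement_bounded k beta Hk Sh) as [M HM].
  destruct (bounded_on_range beta 0 (Z.to_nat k)) as [Mw HMw].
  destruct (is_card_exists_of_bounded2 (fun p => inversion beta p /\ 0 <= fst p < k)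
              0 (Z.max k (Mw + M + 1) + 1)) as [c [l [N [El Len]]]].
  { intros [a b] [[H1 H2] H3]. simpl in *. specialize (HM b). specialize (HMw a ltac:(lia)). lia. }
  exists c, l. split; [auto|split; [auto|split; [|split]]].
  - intros p Hp. apply El; auto.
  - intros [p1 p2] [q1 q2] Hp Hq [E1 [j Hj]]. apply El in Hp. apply El in Hq. simpl in *.
    assert (j = 0) by nia. subst. f_equal; lia.
  - intros [p1 p2] Hp. set (j := p1 / k).
    exists (p1 - j * k, p2 - j * k). split.
    + apply El. unfold inversion in *. simpl in *.
      assert (B : forall n, beta (n - j * k) = beta n - j * k).
      { intros n. replace (n - j * k) with (n + (- j) * k) by lia. rewrite (shift_mult k beta Sh). lia. }
      rewrite !B.
      assert (p1 = k * j + p1 mod k) by (apply Z.div_mod; lia).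
      assert (0 <= p1 mod k < k) by (apply Z.mod_pos_bound; lia). lia.
    + apply kequiv_sym, kequivP. exists (- j). f_equal; lia.
Qed.

(** * The periodic transposition [swap_at k x] *)

Definition swap_at (k x v : Z) : Z :=
  if (v - x) mod k =? 0 then v + 1 else if (v - x - 1) mod k =? 0 then v - 1 else v.

Lemma mod_eq0_succ_false k a : 2 <= k -> a mod k = 0 -> (a - 1) mod k = 0 -> False.
Proof.
  intros Hk H1 H2. apply Z.mod_divide in H1; [|lia]. apply Z.mod_divide in H2; [|lia].
  assert (D : (k | 1)). { replace 1 with (a - (a - 1)) by lia. apply Z.divide_sub_r; auto. }
  apply Z.divide_pos_le in D; lia.
Qed.

Lemma mod_eq0_mul k a : 1 <= k -> a mod k = 0 -> exists j, a = j * k.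
Proof. intros Hk H. apply Z.mod_divide in H; [|lia]. destruct H as [j Hj]. eauto. Qed.

Lemma mod_eq0_gap k x y1 y2 : 1 <= k ->
  (y1 - x - 1) mod k = 0 -> (y2 - x - 1) mod k = 0 -> y1 < y2 -> y1 + k <= y2.
Proof.
  intros Hk H1 H2 H. apply Z.mod_divide in H1; [|lia]. apply Z.mod_divide in H2; [|lia].
  assert (D : (k | y2 - y1)).
  { replace (y2 - y1) with ((y2 - x - 1) - (y1 - x - 1)) by lia. apply Z.divide_sub_r; auto. }
  apply Z.divide_pos_le in D; lia.
Qed.

Section SwapAt.
Variables (k x : Z).
Hypothesis Hk : 2 <= k.

Lemma swap_at_involutive v : swap_at k x (swap_at k x v) = v.
Proof.
  unfold swap_at.
  destruct (Z.eqb_spec ((v - x) mod k) 0) as [E1|E1].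
  - replace (v + 1 - x) with (v - x + 1) by lia. replace (v - x + 1 - 1) with (v - x) by lia.
    destruct (Z.eqb_spec ((v - x + 1) mod k) 0) as [E2|E2].
    + exfalso. apply (mod_eq0_succ_false k (v - x + 1)); auto.
      replace (v - x + 1 - 1) with (v - x) by lia. auto.
    + rewrite E1. simpl. lia.
  - destruct (Z.eqb_spec ((v - x - 1) mod k) 0) as [E2|E2].
    + replace (v - 1 - x) with (v - x - 1) by lia. rewrite E2. simpl. lia.
    + rewrite (proj2 (Z.eqb_neq _ _) E1), (proj2 (Z.eqb_neq _ _) E2). auto.
Qed.

Lemma swap_at_shift v : swap_at k x (v + k) = swap_at k x v + k.
Proof.
  unfold swap_at.
  replace (v + k - x) with (v - x + 1 * k) by lia. rewrite Z.mod_add by lia.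
  replace (v - x + 1 * k - 1) with (v - x - 1 + 1 * k) by lia. rewrite Z.mod_add by lia.
  destruct (_ =? 0); [lia|]. destruct (_ =? 0); lia.
Qed.

Lemma swap_at_low j : swap_at k x (x + j * k) = x + 1 + j * k.
Proof.
  unfold swap_at. replace (x + j * k - x) with (j * k) by lia. rewrite Z.mod_mul by lia. simpl. lia.
Qed.

Lemma swap_at_high j : swap_at k x (x + 1 + j * k) = x + j * k.
Proof. rewrite <- (swap_at_low j), swap_at_involutive. lia. Qed.

Lemma swap_at_cases v :
  (v - x) mod k = 0 /\ swap_at k x v = v + 1 \/
  (v - x - 1) mod k = 0 /\ swap_at k x v = v - 1 \/
  (v - x) mod k <> 0 /\ (v - x - 1) mod k <> 0 /\ swap_at k x v = v.
Proof.
  unfold swap_at.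
  destruct (Z.eqb_spec ((v - x) mod k) 0); [left; auto|].
  destruct (Z.eqb_spec ((v - x - 1) mod k) 0); [right; left; auto|right; right; auto].
Qed.

Lemma swap_at_lt_noncut v l : (l - x - 1) mod k <> 0 -> (swap_at k x v < l <-> v < l).
Proof.
  intros Hl. destruct (swap_at_cases v) as [[C E]|[[C E]|[_ [_ E]]]]; rewrite E; [| |tauto].
  - assert (v <> l - 1); [|lia].
    intros ->. apply Hl. replace (l - x - 1) with (l - 1 - x) by lia. auto.
  - assert (v <> l) by (intros ->; auto). lia.
Qed.

Lemma swap_at_lt_cut v l : (l - x - 1) mod k = 0 -> (swap_at k x v < l <-> v < l - 1 \/ v = l).
Proof.
  intros Hl. destruct (swap_at_cases v) as [[C E]|[[C E]|[C [C' E]]]]; rewrite E.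
  - assert (v <> l); [|lia].
    intros ->. apply (mod_eq0_succ_false k (l - x)); auto.
  - assert (v <> l - 1); [|lia].
    intros ->. apply (mod_eq0_succ_false k (l - x - 1)); auto.
    replace (l - x - 1 - 1) with (l - 1 - x - 1) by lia. auto.
  - assert (v <> l) by (intros ->; auto).
    assert (v <> l - 1); [|lia].
    intros ->. apply C. replace (l - 1 - x) with (l - x - 1) by lia. auto.
Qed.

Lemma swap_at_lt_mono u v : v < u -> ~ ((v - x) mod k = 0 /\ u = v + 1) ->
  swap_at k x v < swap_at k x u.
Proof.
  intros H N.
  assert (Nsucc : (v - x) mod k <> 0 -> (u - x - 1) mod k = 0 -> u <> v + 1).
  { intros Cv Cu E. subst. replace (v + 1 - x - 1) with (v - x) in Cu by lia. auto. }
  destruct (swap_at_cases v) as [[Cv Ev]|[[Cv Ev]|[Cv [_ Ev]]]];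
  destruct (swap_at_cases u) as [[Cu Eu]|[[Cu Eu]|[_ [Cu Eu]]]];
  rewrite Ev, Eu; try lia.
  - destruct (Z.eq_dec u (v + 2)) as [E|]; [|lia]. subst. exfalso.
    apply (mod_eq0_succ_false k (v - x + 1)); auto.
    + replace (v - x + 1) with (v + 2 - x - 1) by lia. auto.
    + replace (v - x + 1 - 1) with (v - x) by lia. auto.
Qed.

End SwapAt.

Lemma descent_exists (g : Z -> Z) :
  forall (n : nat) v u, u = v + Z.of_nat n -> g u < g v -> exists x, g (x + 1) < g x.
Proof.
  induction n; intros v u Hu H.
  - subst. rewrite Z.add_0_r in H. lia.
  - destruct (Z.lt_ge_cases (g (v + 1)) (g v)); [eauto|].
    apply (IHn (v + 1) u); lia.
Qed.

Section Peel.
Variables (k : Z) (beta g : Z -> Z).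
Hypothesis Hk : 2 <= k.
Hypothesis bg : forall x, beta (g x) = x.
Hypothesis gb : forall x, g (beta x) = x.
Hypothesis Hsh : forall n, beta (n + k) = beta n + k.

Let g_mult := shift_mult k g (shift_comm_inverse k beta g bg gb Hsh).
Let beta_mult := shift_mult k beta Hsh.

Lemma inversion_swap_at x : g (x + 1) < g x -> forall p,
  inversion (fun n => swap_at k x (beta n)) p <->
  inversion beta p /\ ~ kequiv k p (g (x + 1), g x).
Proof.
  intros Hd [p1 p2]. unfold inversion. simpl. split.
  - intros [H1 H2]. assert (Ord : beta p2 < beta p1).
    { destruct (classic ((swap_at k x (beta p2) - x) mod k = 0 /\
                         swap_at k x (beta p1) = swap_at k x (beta p2) + 1)) as [[C1 C2]|C].
      - exfalso. destruct (mod_eq0_mul k _ ltac:(lia) C1) as [j Hj].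
        assert (E2 : swap_at k x (beta p2) = x + j * k) by lia.
        rewrite E2 in C2.
        assert (beta p2 = x + 1 + j * k).
        { rewrite <- (swap_at_involutive k x Hk (beta p2)), E2, swap_at_low; lia. }
        assert (beta p1 = x + j * k).
        { rewrite <- (swap_at_involutive k x Hk (beta p1)), C2.
          replace (x + j * k + 1) with (x + 1 + j * k) by lia. rewrite swap_at_high; lia. }
        assert (p2 = g (x + 1) + j * k) by (rewrite <- (gb p2), H, g_mult; auto).
        assert (p1 = g x + j * k) by (rewrite <- (gb p1), H0, g_mult; auto).
        lia.
      - pose proof (swap_at_lt_mono k x Hk (swap_at k x (beta p1)) (swap_at k x (beta p2))
                      ltac:(lia) C) as M.
        rewrite !swap_at_involutive in M by lia. lia. }
    split; [split; auto; lia|].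
    intros E. apply kequivP in E. destruct E as [j Hj]. inversion Hj; subst.
    rewrite !beta_mult, !bg, swap_at_high, swap_at_low in H2 by lia. lia.
  - intros [[H1 H2] N]. split; auto.
    apply Z.lt_gt, swap_at_lt_mono; auto; [lia|]. intros [C1 C2]. apply N.
    destruct (mod_eq0_mul k _ ltac:(lia) C1) as [j Hj].
    apply kequivP. exists j. f_equal.
    + rewrite <- (gb p1). replace (beta p1) with ((x + 1) + j * k) by lia. apply g_mult.
    + rewrite <- (gb p2). replace (beta p2) with (x + j * k) by lia. apply g_mult.
Qed.

Lemma peel_inversion_class t : is_num_inv_classes k beta (S t) ->
  exists x, g (x + 1) < g x /\ is_num_inv_classes k (fun n => swap_at k x (beta n)) t.
Proof.
  intros [L [N [Len [Inv [Pw Cov]]]]].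
  destruct L as [|p0 L0]; [simpl in Len; lia|].
  destruct (Inv p0 (or_introl eq_refl)) as [Hlt Hgt].
  destruct (descent_exists g (Z.to_nat (beta (fst p0) - beta (snd p0))) (beta (snd p0)) (beta (fst p0))
              ltac:(lia) ltac:(rewrite !gb; lia)) as [x Hx].
  exists x. split; auto.
  set (L := p0 :: L0) in *.
  assert (I0 : inversion beta (g (x + 1), g x)) by (unfold inversion; simpl; rewrite !bg; lia).
  destruct (Cov _ I0) as [q [Hq Eq]].
  destruct (in_split _ _ Hq) as [L1 [L2 HL]].
  exists (L1 ++ L2). rewrite HL in N, Len.
  assert (Nq : ~ In q (L1 ++ L2)) by (eapply NoDup_remove_2; eauto).
  split; [eapply NoDup_remove_1; eauto|].
  split; [rewrite length_app in *; simpl in Len; lia|].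
  assert (Sub : forall p, In p (L1 ++ L2) -> In p L).
  { intros p Hp. rewrite HL. apply in_app_or in Hp. apply in_or_app. simpl. tauto. }
  split; [|split].
  - intros p Hp. apply inversion_swap_at; auto. split; [apply Inv, Sub; auto|].
    intros E. assert (p = q) by (apply Pw; auto; eapply kequiv_trans; eauto).
    subst; auto.
  - intros p q' Hp Hq'. apply Pw; auto.
  - intros p Hp. apply inversion_swap_at in Hp; auto. destruct Hp as [Ip Np].
    destruct (Cov p Ip) as [q' [Hq' E']].
    rewrite HL in Hq'. apply in_app_or in Hq'. destruct Hq' as [H|[H|H]].
    + exists q'. split; auto. apply in_or_app; auto.
    + subst. exfalso. apply Np. eapply kequiv_trans; [eauto|]. apply kequiv_sym; auto.
    + exists q'. split; auto. apply in_or_app; auto.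
Qed.

End Peel.

(* [swap_kernel k x l m] is [s_fun (swap_at k x) l m]. *)
Definition swap_kernel (k x l m : Z) : nat :=
  if l <? m then 0%nat
  else (Z.to_nat (l - m) + if Z.eqb l m && Z.eqb ((l - x - 1) mod k) 0 then 1 else 0)%nat.

Section SwapKernel.
Variables (k x : Z) (beta g : Z -> Z).
Hypothesis Hk : 2 <= k.
Hypothesis F : s_finite beta.
Hypothesis bg : forall y, beta (g y) = y.
Hypothesis gb : forall y, g (beta y) = y.
Hypothesis Asc : forall l, (l - x - 1) mod k = 0 -> g (l - 1) < g l.

Lemma s_fun_swap_at_cut l b : (l - x - 1) mod k = 0 ->
  s_fun (fun n => swap_at k x (beta n)) l b =
  (s_fun beta (l - 1) b + if Z.leb b (g l) then 1 else 0)%nat.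
Proof.
  intros C. destruct (F (l - 1) b) as [c Hc]. unfold s_fun. rewrite (card_eq _ _ Hc).
  apply card_eq. destruct (Z.leb_spec b (g l)).
  - rewrite Nat.add_1_r. eapply is_card_ext; [|apply (is_card_add _ _ (g l) Hc)].
    + intros z. rewrite swap_at_lt_cut by auto. split.
      * intros [[H1 H2]| ->]; split; auto; lia || (rewrite bg; lia).
      * intros [H1 [H2| H2]]; [left; auto| right; rewrite <- H2, gb; auto].
    + simpl. rewrite bg. lia.
  - rewrite Nat.add_0_r. eapply is_card_ext; [|apply Hc].
    intros z. rewrite swap_at_lt_cut by auto. split.
    + intros [H1 H2]; split; auto.
    + intros [H1 [H2|H2]]; split; auto. exfalso. rewrite <- H2, gb in H. lia.
Qed.

Lemma s_fun_swap_at_noncut l b : (l - x - 1) mod k <> 0 ->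
  s_fun (fun n => swap_at k x (beta n)) l b = s_fun beta l b.
Proof.
  intros C. unfold s_fun. apply card_ext. intros z. rewrite swap_at_lt_noncut by auto. tauto.
Qed.

(* The Demazure identity for the length-additive product [swap_at k x] * [beta]. *)
Lemma s_fun_swap_at_min l b :
  is_min (fun m => (swap_kernel k x l m + s_fun beta m b)%nat)
         (s_fun (fun n => swap_at k x (beta n)) l b).
Proof.
  set (s := fun m => s_fun beta m b).
  assert (Sv : forall m, s (m + 1) = (s m + if Z.leb b (g m) then 1 else 0)%nat)
    by (intros m; apply s_fun_step_value; auto).
  assert (Inc : forall m, (s m <= s (m + 1)%Z <= s m + 1)%nat)
    by (intros m; rewrite Sv; destruct (Z.leb _ _); lia).
  assert (Up : forall m, l < m -> (s (l + 1)%Z <= s m)%nat)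
    by (intros m Hm; apply (lipschitz_nondecr_le s Inc); lia).
  assert (Dn : forall m, m < l -> Z.of_nat (s (l - 1)) <= Z.of_nat (s m) + (l - 1 - m))
    by (intros m Hm; apply (lipschitz_nondecr_le s Inc); lia).
  assert (Sl : s l = (s (l - 1)%Z + if Z.leb b (g (l - 1)) then 1 else 0)%nat)
    by (rewrite <- Sv; f_equal; lia).
  subst s. cbv beta in *. unfold swap_kernel.
  destruct (Z.eq_dec ((l - x - 1) mod k) 0) as [C|C].
  - rewrite s_fun_swap_at_cut by auto.
    pose proof (Asc l C) as A. pose proof (Sv l) as Sl1.
    split.
    + destruct (Z.leb_spec b (g l)).
      * exists (l - 1). rewrite (proj2 (Z.ltb_ge _ _)), (proj2 (Z.eqb_neq l (l - 1))) by lia.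
        replace (l - (l - 1)) with 1 by lia. simpl. lia.
      * exists (l + 1). rewrite (proj2 (Z.ltb_lt _ _)) by lia.
        rewrite Sl1, Sl. destruct (Z.leb_spec b (g l)); [lia|].
        destruct (Z.leb_spec b (g (l - 1))); lia.
    + intros m. destruct (Z.ltb_spec l m).
      * specialize (Up m H). rewrite Sl1, Sl in Up. destruct (Z.leb _ _), (Z.leb _ _); simpl; lia.
      * destruct (Z.eqb_spec l m).
        -- subst. rewrite C, Z.sub_diag. simpl. rewrite Sl.
           destruct (Z.leb _ (g m)), (Z.leb _ (g (m - 1))); lia.
        -- specialize (Dn m ltac:(lia)). simpl. destruct (Z.leb b (g l)); lia.
  - rewrite s_fun_swap_at_noncut by auto. split.
    + exists l. rewrite Z.ltb_irrefl, Z.eqb_refl, Z.sub_diag, (proj2 (Z.eqb_neq _ _) C). simpl. lia.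
    + intros m. destruct (Z.ltb_spec l m).
      * specialize (Up m H). rewrite Sv in Up. destruct (Z.leb _ _); lia.
      * destruct (Z.eqb_spec l m); [subst; lia|].
        specialize (Dn m ltac:(lia)). rewrite Sl. simpl. destruct (Z.leb _ _); lia.
Qed.

End SwapKernel.

(** * Staircases and their inversions *)

Definition staircase (G : Z -> nat) : Prop :=
  (forall x, G x = G (x + 1) \/ G x = S (G (x + 1))) /\
  (exists B, forall x, B <= x -> G x = 0%nat) /\
  (exists A, forall x, x <= A -> G x = S (G (x + 1))).

Definition stair_inversion (G : Z -> nat) (p : Z * Z) : Prop :=
  fst p < snd p /\ G (fst p) = G (fst p + 1) /\ G (snd p) <> G (snd p + 1).

Definition stair_inv (G : Z -> nat) : nat := card (stair_inversion G).

Lemma staircase_step G : staircase G -> forall m, (G (m + 1)%Z <= G m <= G (m + 1)%Z + 1)%nat.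
Proof. intros [St _] m. destruct (St m); lia. Qed.

Lemma stair_inversion_finite G : staircase G -> exists c, is_card (stair_inversion G) c.
Proof.
  intros [St [[B HB] [A HA]]].
  apply (is_card_exists_of_bounded2 _ (Z.min A B) (Z.max A B + 1)).
  intros [x y] [H1 [H2 H3]]. simpl in *.
  assert (A < x).
  { destruct (Z.le_gt_cases x A) as [Hx|]; auto. rewrite (HA x Hx) in H2. lia. }
  assert (y < B).
  { destruct (Z.le_gt_cases B y) as [Hy|]; auto.
    rewrite (HB y Hy), (HB (y + 1)) in H3 by lia. congruence. }
  lia.
Qed.

Lemma stair_inv_translate G c : staircase G -> stair_inv (fun b => G (b + c)) = stair_inv G.
Proof.
  intros SG. destruct (stair_inversion_finite G SG) as [c0 Hc]. unfold stair_inv.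
  rewrite (card_eq _ _ Hc). apply card_eq.
  pose proof (is_card_comp_bij (stair_inversion G) c0 (fun p => (fst p + c, snd p + c))
    (fun p => (fst p - c, snd p - c))
    ltac:(intros [a b]; simpl; f_equal; lia) ltac:(intros [a b]; simpl; f_equal; lia) Hc) as H.
  eapply is_card_ext; [|apply H]. intros [a b]. unfold stair_inversion. simpl.
  replace (a + 1 + c) with (a + c + 1) by lia. replace (b + 1 + c) with (b + c + 1) by lia. lia.
Qed.

Definition bump_site (k x : Z) (G : Z -> nat) (m : Z) : bool :=
  Z.eqb ((m - x - 1) mod k) 0 && Nat.eqb (G (m - 1)) (S (G m)) && Nat.eqb (G m) (G (m + 1)).

Definition bump (k x : Z) (G : Z -> nat) (m : Z) : nat :=
  (G m + if bump_site k x G m then 1 else 0)%nat.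

Lemma bump_site_true k x G y : bump_site k x G y = true ->
  G (y - 1) = S (G y) /\ G y = G (y + 1) /\ (y - x - 1) mod k = 0.
Proof.
  unfold bump_site. intros H. apply andb_prop in H as [H H3]. apply andb_prop in H as [H1 H2].
  apply Z.eqb_eq in H1. apply Nat.eqb_eq in H2. apply Nat.eqb_eq in H3. auto.
Qed.

Lemma staircase_bump G k x : staircase G -> staircase (bump k x G).
Proof.
  intros [St [[B HB] [A HA]]]. unfold bump. split; [|split].
  - intros y. destruct (bump_site k x G y) eqn:E1, (bump_site k x G (y + 1)) eqn:E2;
      try apply bump_site_true in E1; try apply bump_site_true in E2;
      try replace (y + 1 - 1) with y in E2 by lia; try lia.
    rewrite !Nat.add_0_r. auto.
  - exists (B + 1). intros y Hy. destruct (bump_site k x G y) eqn:E1.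
    + apply bump_site_true in E1. rewrite (HB (y - 1)) in E1 by lia. lia.
    + rewrite HB by lia. auto.
  - exists (A - 1). intros y Hy.
    destruct (bump_site k x G y) eqn:E1, (bump_site k x G (y + 1)) eqn:E2;
      try apply bump_site_true in E1; try apply bump_site_true in E2.
    + rewrite (HA y) in E1 by lia. lia.
    + rewrite (HA y) in E1 by lia. lia.
    + rewrite (HA (y + 1)) in E2 by lia. lia.
    + rewrite !Nat.add_0_r. apply HA. lia.
Qed.

Lemma bump_min G k x m : staircase G ->
  is_min (fun l => (G l + swap_kernel k x l m)%nat) (bump k x G m).
Proof.
  intros SG. pose proof (staircase_step G SG) as D.
  assert (H1 : (G m <= G (m - 1)%Z <= G m + 1)%nat).
  { specialize (D (m - 1)). replace (m - 1 + 1) with m in D by lia. lia. }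
  assert (H2 := D m).
  assert (Lo : forall l, l < m -> (G (m - 1)%Z <= G l)%nat)
    by (intros l Hl; apply (lipschitz_nonincr_le G D l (m - 1)); lia).
  assert (Hi : forall l, m < l -> Z.of_nat (G (m + 1)%Z) <= Z.of_nat (G l) + (l - (m + 1)))
    by (intros l Hl; apply (lipschitz_nonincr_le G D (m + 1) l); lia).
  unfold bump, bump_site, swap_kernel. split.
  - destruct (Z.eqb_spec ((m - x - 1) mod k) 0) as [C|C];
    destruct (Nat.eqb_spec (G (m - 1)%Z) (S (G m))) as [E1|E1];
    destruct (Nat.eqb_spec (G m) (G (m + 1)%Z)) as [E2|E2]; simpl;
    [ exists m; rewrite Z.ltb_irrefl, Z.eqb_refl, C, Z.sub_diag; simpl; lia
    | exists (m + 1); rewrite (proj2 (Z.ltb_ge _ _)), (proj2 (Z.eqb_neq _ _)) by lia;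
      replace (m + 1 - m) with 1 by lia; simpl; lia
    | exists (m - 1); rewrite (proj2 (Z.ltb_lt _ _)) by lia; lia
    | exists (m - 1); rewrite (proj2 (Z.ltb_lt _ _)) by lia; lia
    | exists m; rewrite Z.ltb_irrefl, Z.eqb_refl, Z.sub_diag, (proj2 (Z.eqb_neq _ _)) by auto;
      simpl; lia .. ].
  - intros l. destruct (Z.ltb_spec l m) as [Hl|Hl].
    + specialize (Lo l Hl).
      destruct (Z.eqb _ 0), (Nat.eqb_spec (G (m - 1)%Z) (S (G m))), (Nat.eqb _ _); simpl; lia.
    + destruct (Z.eqb_spec l m).
      * subst. rewrite Z.sub_diag.
        destruct (Z.eqb _ 0), (Nat.eqb _ _), (Nat.eqb _ _); simpl; lia.
      * specialize (Hi l ltac:(lia)).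
        destruct (Z.eqb _ 0), (Nat.eqb_spec (G (m - 1)%Z) (S (G m))),
                 (Nat.eqb_spec (G m) (G (m + 1)%Z)); simpl; lia.
Qed.

(* Two bump sites y1 < y2 are at least [k] apart; each step strictly between them forms an
   inversion with the drop at [y2 - 1] if it is flat, or with the flat step at [y1] if not. *)
Lemma two_bump_sites_stair_inv k x G y1 y2 : 2 <= k -> staircase G ->
  bump_site k x G y1 = true -> bump_site k x G y2 = true -> y1 < y2 ->
  k - 1 <= Z.of_nat (stair_inv G).
Proof.
  intros Hk SG S1 S2 Hy. apply bump_site_true in S1. apply bump_site_true in S2.
  pose proof (mod_eq0_gap k x y1 y2 ltac:(lia) (proj2 (proj2 S1)) (proj2 (proj2 S2)) Hy) as Dk.
  destruct (stair_inversion_finite G SG) as [c Hc]. unfold stair_inv. rewrite (card_eq _ _ Hc).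
  set (f := fun z => if Nat.eqb (G z) (G (z + 1)) then (z, y2 - 1) else (y1, z)).
  set (L := (y1, y2 - 1) :: map f (zrange (y1 + 1) (y2 - 1))).
  assert (Len : length L = S (Z.to_nat (y2 - 1 - (y1 + 1))))
    by (unfold L; simpl; rewrite length_map, length_zrange; auto).
  assert (LL : (length L <= c)%nat).
  { apply (is_card_length_le (stair_inversion G)); auto.
    - constructor.
      + rewrite in_map_iff. intros [z [Hz Hin]]. apply in_zrange in Hin. unfold f in Hz.
        destruct (Nat.eqb _ _); inversion Hz; lia.
      + apply Injective_map_NoDup_in; [|apply NoDup_zrange].
        intros a b Ha Hb Hab. apply in_zrange in Ha. apply in_zrange in Hb. unfold f in Hab.
        destruct (Nat.eqb _ _), (Nat.eqb _ _); inversion Hab; lia.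
    - intros p [<-|Hp]; unfold stair_inversion.
      + simpl. replace (y2 - 1 + 1) with y2 by lia. lia.
      + apply in_map_iff in Hp. destruct Hp as [z [<- Hz]]. apply in_zrange in Hz. unfold f.
        destruct (Nat.eqb_spec (G z) (G (z + 1))); simpl; [|lia].
        replace (y2 - 1 + 1) with y2 by lia. lia. }
  lia.
Qed.

Definition adj_transposition (y0 z : Z) : Z :=
  if z =? y0 - 1 then y0 else if z =? y0 then y0 - 1 else z.

Lemma adj_transposition_involutive y0 z : adj_transposition y0 (adj_transposition y0 z) = z.
Proof.
  unfold adj_transposition.
  destruct (Z.eqb_spec z (y0 - 1)); [rewrite (proj2 (Z.eqb_neq _ _)) by lia; rewrite Z.eqb_refl; lia|].
  destruct (Z.eqb_spec z y0); [rewrite Z.eqb_refl; auto|].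
  rewrite (proj2 (Z.eqb_neq _ _) n), (proj2 (Z.eqb_neq _ _) n0). auto.
Qed.

(* Bumping at [y0] moves the drop at [y0 - 1] to [y0]: the inversions of the bump are those of
   [G] conjugated by the transposition of [y0 - 1] and [y0], plus the new one [(y0 - 1, y0)]. *)
Lemma stair_inv_bump_at G k x y0 : staircase G ->
  (forall z, bump k x G z = (G z + if Z.eqb z y0 then 1 else 0)%nat) ->
  G (y0 - 1) = S (G y0) -> G y0 = G (y0 + 1) ->
  stair_inv (bump k x G) = S (stair_inv G).
Proof.
  intros SG Hs E1 E2.
  set (tau := adj_transposition y0).
  assert (tau_inv : forall z, tau (tau z) = z) by apply adj_transposition_involutive.
  assert (Flat : forall z, bump k x G z = bump k x G (z + 1) <-> G (tau z) = G (tau z + 1)).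
  { intros z. rewrite !Hs. unfold tau, adj_transposition.
    destruct (Z.eqb_spec z (y0 - 1)).
    - subst. replace (y0 - 1 + 1) with y0 by lia. rewrite Z.eqb_refl.
      destruct (Z.eqb_spec (y0 - 1) y0); lia.
    - destruct (Z.eqb_spec z y0).
      + subst. replace (y0 - 1 + 1) with y0 by lia. destruct (Z.eqb_spec (y0 + 1) y0); lia.
      + destruct (Z.eqb_spec (z + 1) y0); lia. }
  destruct (stair_inversion_finite G SG) as [c Hc]. unfold stair_inv. rewrite (card_eq _ _ Hc).
  set (tau2 := fun p : Z * Z => (tau (fst p), tau (snd p))).
  assert (tau2_inv : forall p, tau2 (tau2 p) = p) by (intros [a b]; unfold tau2; simpl; rewrite !tau_inv; auto).
  assert (Hc2 := is_card_add _ _ (y0 - 1, y0) (is_card_comp_bij _ c tau2 tau2 tau2_inv tau2_inv Hc)).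
  apply card_eq. eapply is_card_ext; [|apply Hc2].
  - intros [a b]. unfold stair_inversion, tau2, tau, adj_transposition in *; simpl in *.
    rewrite !Flat. unfold tau, adj_transposition. split.
    + intros [[H1 [H2 H3]] | H].
      * split; auto.
        destruct (Z.eqb_spec a (y0 - 1)), (Z.eqb_spec a y0), (Z.eqb_spec b (y0 - 1)),
                 (Z.eqb_spec b y0); subst; try lia;
          replace (y0 - 1 + 1) with y0 in * by lia; lia.
      * inversion H; subst. rewrite Z.eqb_refl, (proj2 (Z.eqb_neq y0 (y0 - 1))), Z.eqb_refl by lia.
        replace (y0 - 1 + 1) with y0 by lia. lia.
    + intros [H1 [H2 H3]].
      destruct (classic ((a, b) = (y0 - 1, y0))) as [E|E]; [right; auto|left].
      split; auto.
      destruct (Z.eqb_spec a (y0 - 1)), (Z.eqb_spec a y0), (Z.eqb_spec b (y0 - 1)),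
               (Z.eqb_spec b y0); subst; try lia; congruence.
  - unfold stair_inversion, tau2, tau, adj_transposition; simpl.
    rewrite Z.eqb_refl, (proj2 (Z.eqb_neq y0 (y0 - 1))), Z.eqb_refl by lia. lia.
Qed.

Lemma stair_inv_bump G k x : 2 <= k -> staircase G -> Z.of_nat (stair_inv G) + 2 <= k ->
  (stair_inv (bump k x G) <= stair_inv G + 1)%nat.
Proof.
  intros Hk SG Hinv.
  destruct (classic (exists y, bump_site k x G y = true)) as [[y0 Hy0]|NS].
  - assert (Uniq : forall y, bump_site k x G y = true -> y = y0).
    { intros y Hy. destruct (Z.lt_total y y0) as [L|[L|L]]; auto; exfalso.
      - pose proof (two_bump_sites_stair_inv k x G y y0 Hk SG Hy Hy0 L). lia.
      - pose proof (two_bump_sites_stair_inv k x G y0 y Hk SG Hy0 Hy L). lia. }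
    destruct (bump_site_true _ _ _ _ Hy0) as [E1 [E2 _]].
    rewrite (stair_inv_bump_at G k x y0); auto; [lia|].
    intros z. unfold bump. destruct (Z.eqb_spec z y0); [subst; rewrite Hy0; auto|].
    destruct (bump_site k x G z) eqn:E; auto. exfalso. auto.
  - replace (bump k x G) with G; [lia|].
    apply functional_extensionality. intros z. unfold bump.
    destruct (bump_site k x G z) eqn:E; [exfalso; eauto|lia].
Qed.

(** * Min-plus products of staircases with affine permutations *)

Lemma stair_inv_minplus_translation k beta g G H : 1 <= k ->
  (forall x, beta (g x) = x) -> (forall x, g (beta x) = x) ->
  (forall n, beta (n + k) = beta n + k) ->
  is_num_inv_classes k beta 0 -> staircase G ->
  (forall b, is_min (fun l => (G l + s_fun beta l b)%nat) (H b)) ->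
  stair_inv H = stair_inv G.
Proof.
  intros Hk bg gb Sh [L [_ [Len [_ [_ Cov]]]]] SG Hm.
  destruct L; [|discriminate].
  assert (Tr : forall n, beta n = n + beta 0).
  { apply (no_inversion_translation beta g); auto. intros a b Hab.
    destruct (Z.le_gt_cases (beta a) (beta b)); auto.
    destruct (Cov (a, b) ltac:(unfold inversion; simpl; lia)) as [q [[] _]]. }
  set (c := beta 0) in *.
  pose proof (staircase_step G SG) as D.
  assert (HE : forall b, H b = G (b + c)).
  { intros b. apply (is_min_unique _ _ _ (Hm b)). split.
    - exists (b + c). replace (s_fun beta (b + c) b) with 0%nat; [lia|].
      symmetry. apply card_eq, is_card_empty. intros z [H1 H2]. rewrite Tr in H2. lia.
    - intros l. destruct (Z.le_gt_cases l (b + c)).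
      + pose proof (lipschitz_nonincr_le G D l (b + c) H0). lia.
      + pose proof (lipschitz_nonincr_le G D (b + c) l ltac:(lia)).
        destruct (s_finite_shift_comm k beta Hk Sh l b) as [c1 Hc1].
        assert (Lc : (length (zrange b (l - c)) <= c1)%nat).
        { apply (is_card_length_le _ _ _ Hc1); [apply NoDup_zrange|].
          intros z Hz. apply in_zrange in Hz. rewrite Tr. lia. }
        rewrite length_zrange in Lc. unfold s_fun. rewrite (card_eq _ _ Hc1). lia. }
  replace H with (fun b => G (b + c)) by (apply functional_extensionality; auto).
  apply stair_inv_translate; auto.
Qed.

Lemma minplus_swap_at k x beta g G b h : 2 <= k ->
  (forall y, beta (g y) = y) -> (forall y, g (beta y) = y) ->
  (forall n, beta (n + k) = beta n + k) -> g (x + 1) < g x -> staircase G ->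
  is_min (fun l => (G l + s_fun beta l b)%nat) h ->
  is_min (fun m => (bump k x G m + s_fun (fun n => swap_at k x (beta n)) m b)%nat) h.
Proof.
  intros Hk bg gb Sh Hx SG Hm.
  set (beta2 := fun n => swap_at k x (beta n)).
  set (g2 := fun n => g (swap_at k x n)).
  assert (bg2 : forall y, beta2 (g2 y) = y)
    by (intros y; unfold beta2, g2; rewrite bg; apply swap_at_involutive; auto).
  assert (gb2 : forall y, g2 (beta2 y) = y)
    by (intros y; unfold beta2, g2; rewrite swap_at_involutive, gb; auto).
  assert (Sh2 : forall n, beta2 (n + k) = beta2 n + k)
    by (intros n; unfold beta2; rewrite Sh; apply swap_at_shift; auto).
  assert (Asc : forall l, (l - x - 1) mod k = 0 -> g2 (l - 1) < g2 l).
  { intros l C. unfold g2. destruct (mod_eq0_mul k _ ltac:(lia) C) as [j Hj].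
    replace (l - 1) with (x + j * k) by lia. rewrite swap_at_low by auto.
    replace l with (x + 1 + j * k) by lia. rewrite swap_at_high by auto.
    rewrite !(shift_mult k g (shift_comm_inverse k beta g bg gb Sh)). lia. }
  apply (is_min_minplus_assoc G (swap_kernel k x) (fun m => s_fun beta2 m b)
           (fun l => s_fun beta l b)); auto.
  - intros l. replace beta with (fun n => swap_at k x (beta2 n))
      by (apply functional_extensionality; intros n; apply swap_at_involutive; auto).
    apply (s_fun_swap_at_min k x beta2 g2); auto. apply (s_finite_shift_comm k); auto; lia.
  - intros m. apply bump_min; auto.
Qed.

Lemma stair_inv_minplus k t : 1 <= k -> forall beta g G H,
  (forall x, beta (g x) = x) -> (forall x, g (beta x) = x) ->
  (forall n, beta (n + k) = beta n + k) ->
  is_num_inv_classes k beta t -> staircase G -> Z.of_nat (stair_inv G + t) < k ->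
  (forall b, is_min (fun l => (G l + s_fun beta l b)%nat) (H b)) ->
  (stair_inv H <= stair_inv G + t)%nat.
Proof.
  intros Hk. induction t as [|t IH]; intros beta g G H bg gb Sh Cl SG Lt Hm.
  - rewrite (stair_inv_minplus_translation k beta g G H); auto. lia.
  - destruct (peel_inversion_class k beta g ltac:(lia) bg gb Sh t Cl) as [x [Hx Cl2]].
    pose proof (stair_inv_bump G k x ltac:(lia) SG ltac:(lia)) as Bump.
    enough (stair_inv H <= stair_inv (bump k x G) + t)%nat by lia.
    apply (IH (fun n => swap_at k x (beta n)) (fun n => g (swap_at k x n))); auto.
    + intros y. rewrite bg. apply swap_at_involutive; lia.
    + intros y. rewrite swap_at_involutive, gb; auto; lia.
    + intros n. rewrite Sh. apply swap_at_shift; lia.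
    + apply staircase_bump; auto.
    + lia.
    + intros b. apply (minplus_swap_at k x beta g); auto; lia.
Qed.

(** * Almost-sign-preserving permutations *)

Section AlmostSignPreserving.
Variables (f g : Z -> Z) (E : list Z).
Hypothesis fg : forall x, f (g x) = x.
Hypothesis gf : forall x, g (f x) = x.
Hypothesis HE : forall n, ~ same_sign n (f n) -> In n E.

Lemma s_finite_ASP : s_finite f.
Proof.
  intros a b. destruct (list_bounds E) as [m [M HM]].
  destruct (bounded_on_range g 1 (Z.to_nat (a - 1))) as [Mg HMg].
  apply (is_card_exists_of_bounded _ b (Z.max (Z.max M 0) Mg + 1)). intros l [H1 H2]. split; auto.
  destruct (classic (same_sign l (f l))) as [[[S1 S2]|[S1 S2]]|S]; [|lia|].
  - specialize (HMg (f l) ltac:(lia)). rewrite gf in HMg. lia.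
  - specialize (HM l (HE l S)). lia.
Qed.

Definition nonpos_count (b : Z) : nat := s_fun f 1 b.

Lemma nonpos_count_step b :
  nonpos_count b = (nonpos_count (b + 1) + if Z.ltb (f b) 1 then 1 else 0)%nat.
Proof. apply s_fun_step_index, s_finite_ASP. Qed.

Lemma staircase_nonpos_count : staircase nonpos_count.
Proof.
  destruct (list_bounds E) as [m [M HM]].
  split; [|split].
  - intros x. rewrite nonpos_count_step. destruct (Z.ltb _ _); lia.
  - exists (Z.max M 0 + 1). intros x Hx. apply card_eq, is_card_empty.
    intros l [H1 H2]. destruct (classic (same_sign l (f l))) as [[]|S]; [lia|lia|].
    specialize (HM l (HE l S)). lia.
  - exists (Z.min m 0 - 1). intros x Hx. rewrite nonpos_count_step.
    destruct (Z.ltb_spec (f x) 1); [lia|]. exfalso.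
    destruct (classic (same_sign x (f x))) as [[]|S]; [lia|lia|].
    specialize (HM x (HE x S)). lia.
Qed.

Lemma stair_inv_nonpos_count : stair_inv nonpos_count = sci f.
Proof.
  apply card_ext. intros [a b]. unfold stair_inversion. simpl.
  rewrite (nonpos_count_step a), (nonpos_count_step b).
  destruct (Z.ltb_spec (f a) 1), (Z.ltb_spec (f b) 1); lia.
Qed.

End AlmostSignPreserving.

Theorem mainTheorem18 (k : Z) (alpha beta gamma : Z -> Z) :
  1 <= k -> ASP alpha -> EA k beta ->
  ASP gamma -> is_demazure alpha beta gamma ->
  Z.of_nat (sci alpha + inv_k k beta) < k ->
  (sci gamma <= sci alpha + inv_k k beta)%nat.
Proof.
  intros Hk [[ga [gaa aga]] [Ea HEa]] [[gb [gbb bgb]] Sh] [[gg [ggg gag]] [Eg HEg]] Dem Hlt.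
  pose proof (choose_nat_spec _ (num_inv_classes_exists k beta Hk Sh)) as Cl.
  rewrite <- (stair_inv_nonpos_count alpha ga Ea gaa HEa) in *.
  rewrite <- (stair_inv_nonpos_count gamma gg Eg ggg HEg).
  apply (stair_inv_minplus k (inv_k k beta) Hk beta gb); auto.
  - apply (staircase_nonpos_count alpha ga Ea); auto.
  - intros b. destruct (Dem 1 b) as [[l Hl] A]. split; eauto.
Qed.
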